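(* In the parallel-links routing game with homogeneous costs described in the context and $N=2$ users, the Nash Bargaining Solution $\tilde{\mathbf g}$ of $(\mathcal G,\hat{\mathbf J})$ is the feasible, system-optimal cost vector with equal gains, i.e., $\tilde g^1+\tilde g^2=J^*_{sys}$ and $\hat J^1-\tilde g^1=\hat J^2-\tilde g^2$.
   Context: Parallel-links routing game: users $\mathcal N=\{1,\dots,N\}$ share parallel links $\mathcal L=\{1,\dots,L\}$ from a common source to a common destination; link $l$ has capacity $c_l$. User $i$ has demand $r^i>0$, $R=\sum_ir^i<\sum_lc_l$. A routing strategy of user $i$ is $\mathbf f^i=(f^i_l)_l$ with $f^i_l\ge0$, $\sum_lf^i_l=r^i$; feasible profiles form $\mathbf F$; $f_l=\sum_if^i_l$. Homogeneous costs: $J^i(\mathbf f)=\sum_lf^i_lT_l(f_l)$, each $T_l:[0,\infty)\to[0,\infty)$ strictly increasing, convex, continuously differentiable, with $T_l(f_l)=T(c_l-f_l)$ for $f_l<c_l$ and $T_l(f_l)=\infty$ for $f_l\ge c_l$, for a single link-independent function $T$ with $T(c_l-f_l)$ strictly increasing in $f_l$. NEP: the unique feasible $\hat{\mathbf f}$ in which each user's strategy minimizes its cost given the others'; $\hat J^i=J^i(\hat{\mathbf f})$, $\hat{\mathbf J}=(\hat J^i)_i$. $J^*_{sys}$ is the minimum over $\mathbf F$ of $\sum_iJ^i=\sum_lf_lT_l(f_l)$. $\mathcal G$ is the set of all vectors $\sum_{m=1}^Mp_m(J^1(\mathbf f(m)),\dots,J^N(\mathbf f(m)))$ with $M$ finite,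 $p_m>0$, $\sum_mp_m=1$, $\mathbf f(m)\in\mathbf F$. The NBS is the unique $\tilde{\mathbf g}$ maximizing $\prod_i(\hat J^i-g^i)$ over $\mathbf g\in\mathcal G$ with $g^i\le\hat J^i$ for all $i$ (equivalently, the unique vector satisfying Nash's axioms of individual rationality, Pareto optimality, symmetry, invariance to affine payoff transformations, and independence of irrelevant alternatives). *)

From Stdlib Require Import Reals Lra Lia List.
From Coquelicot Require Import Coquelicot.
Open Scope R_scope.

Fixpoint sumL (n : nat) (F : nat -> R) : R :=
  match n with O => 0 | S m => sumL m F + F m end.

(* A routing profile for 2 users (indices 0,1) over links 0..L-1:
   prof i l = flow of user i on link l. *)
Definition profile := nat -> nat -> R.

(* link cost T_l(x) = T(c_l - x)  (for x < c_l; infinite for x >= c_l) *)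
Definition Tl (T : R -> R) (c : nat -> R) (l : nat) (x : R) : R := T (c l - x).

Definition agg (f : profile) (l : nat) : R := f 0%nat l + f 1%nat l.

(* Feasible profiles with finite cost: nonnegative flows meeting demands and
   total flow strictly below capacity on every link. *)
Definition feasible (L : nat) (c r : nat -> R) (f : profile) : Prop :=
  (forall i l, (i < 2)%nat -> (l < L)%nat -> 0 <= f i l) /\
  (forall i, (i < 2)%nat -> sumL L (f i) = r i) /\
  (forall l, (l < L)%nat -> agg f l < c l).

Definition J (L : nat) (T : R -> R) (c : nat -> R) (f : profile) (i : nat) : R :=
  sumL L (fun l => f i l * Tl T c l (agg f l)).

Definition upd (f : profile) (i : nat) (s : nat -> R) : profile :=
  fun j l => if Nat.eqb j i then s l else f j l.

Definition is_NEP L T c r (f : profile) : Prop :=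
  feasible L c r f /\
  forall i s, (i < 2)%nat -> feasible L c r (upd f i s) ->
    J L T c f i <= J L T c (upd f i s) i.

Definition is_sys_min L T c r (v : R) : Prop :=
  (exists f, feasible L c r f /\ J L T c f 0 + J L T c f 1 = v) /\
  (forall f, feasible L c r f -> v <= J L T c f 0 + J L T c f 1).

Fixpoint wsum (ws : list (R * profile)) (F : profile -> R) : R :=
  match ws with nil => 0 | (p, f) :: t => p * F f + wsum t F end.

Definition in_G L T c r (g : R * R) : Prop :=
  exists ws : list (R * profile),
    ws <> nil /\
    List.Forall (fun pf => 0 < fst pf /\ feasible L c r (snd pf)) ws /\
    wsum ws (fun _ => 1) = 1 /\
    fst g = wsum ws (fun f => J L T c f 0) /\
    snd g = wsum ws (fun f => J L T c f 1).

Definition bargain_adm L T c r (Jh g : R * R) : Prop :=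
  in_G L T c r g /\ fst g <= fst Jh /\ snd g <= snd Jh.

Definition nash_prod (Jh g : R * R) : R := (fst Jh - fst g) * (snd Jh - snd g).

Definition is_NBS L T c r (Jh g : R * R) : Prop :=
  bargain_adm L T c r Jh g /\
  (forall g', bargain_adm L T c r Jh g' -> nash_prod Jh g' <= nash_prod Jh g) /\
  (forall g', bargain_adm L T c r Jh g' -> nash_prod Jh g <= nash_prod Jh g' -> g' = g).

Definition strictly_increasing_on (cl : R) (h : R -> R) : Prop :=
  forall x y, 0 <= x -> x < y -> y < cl -> h x < h y.

Definition convex_on (cl : R) (h : R -> R) : Prop :=
  forall x y t, 0 <= x < cl -> 0 <= y < cl -> 0 <= t <= 1 ->
    h (t * x + (1 - t) * y) <= t * h x + (1 - t) * h y.

Definition C1_on (cl : R) (h : R -> R) : Prop :=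
  exists d : R -> R,
    (forall x, 0 < x < cl -> is_derive h x (d x)) /\
    filterlim (fun t => (h t - h 0) / t) (at_right 0) (locally (d 0)) /\
    (forall x, 0 <= x < cl ->
       filterlim d (within (fun y => 0 <= y < cl) (locally x)) (locally (d x))).

(* Let A be the link loads of a system-optimal profile. Moving a small amount e of
   flow from link l to link m is unprofitable both for an equilibrium user and for
   the system optimum; by convexity of the link costs these two facts are
   incompatible with an equilibrium user carrying more than A_l on l. Hence user i
   can answer the equilibrium strategy \hat f^j of the other user by A - \hat f^j:
   the resulting profile has loads A, so it is system optimal, and by the
   equilibrium property it costs user i at least \hat J^i. These two system-optimal cost
   vectors lie on the line g^1 + g^2 = J*_sys on either side of the equal-gain
   point, which therefore belongs to G. Every point of G satisfies
   g^1 + g^2 >= J*_sys, so the Nash product on G is at most d^2, where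
   2 d = \hat J^1 + \hat J^2 - J*_sys, with equality only at the equal-gain point. *)
From Stdlib Require Import Reals Lra Lia Classical.
From Coquelicot Require Import Coquelicot.
Open Scope R_scope.

Lemma sumL_ext n F G : (forall k, (k < n)%nat -> F k = G k) -> sumL n F = sumL n G.
Proof.
  induction n as [|n IH]; intros H; simpl; [reflexivity|].
  rewrite IH, H; [reflexivity | lia | intros; apply H; lia].
Qed.

Lemma sumL_add n F G : sumL n (fun k => F k + G k) = sumL n F + sumL n G.
Proof. induction n as [|n IH]; simpl; [lra|]. rewrite IH; lra. Qed.

Lemma sumL_sub n F G : sumL n (fun k => F k - G k) = sumL n F - sumL n G.
Proof. induction n as [|n IH]; simpl; [lra|]. rewrite IH; lra. Qed.

Lemma sumL_le n F G : (forall k, (k < n)%nat -> F k <= G k) -> sumL n F <= sumL n G.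
Proof.
  induction n as [|n IH]; intros H; simpl; [lra|].
  assert (sumL n F <= sumL n G) by (apply IH; intros; apply H; lia).
  assert (F n <= G n) by (apply H; lia). lra.
Qed.

Lemma sumL_update n F G l : (l < n)%nat ->
  (forall k, (k < n)%nat -> k <> l -> F k = G k) ->
  sumL n F = sumL n G + (F l - G l).
Proof.
  induction n as [|n IH]; intros Hl H; simpl; [lia|].
  destruct (Nat.eq_dec l n) as [->|Hne].
  - rewrite (sumL_ext n F G) by (intros; apply H; lia). lra.
  - rewrite IH, (H n) by (lia || (intros; apply H; lia)). lra.
Qed.

Lemma sumL_update2 n F G l m : (l < n)%nat -> (m < n)%nat -> l <> m ->
  (forall k, (k < n)%nat -> k <> l -> k <> m -> F k = G k) ->
  sumL n F = sumL n G + (F l - G l) + (F m - G m).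
Proof.
  intros Hl Hm Hlm H.
  set (Fl := fun k => if Nat.eqb k l then F l else G k).
  assert (Fl_l : Fl l = F l) by (unfold Fl; rewrite Nat.eqb_refl; reflexivity).
  assert (Fl_m : Fl m = G m) by (unfold Fl; destruct (Nat.eqb_spec m l); [lia|reflexivity]).
  rewrite (sumL_update n F Fl m), (sumL_update n Fl G l); auto.
  - rewrite Fl_l, Fl_m. lra.
  - intros k _ Hk. unfold Fl. destruct (Nat.eqb_spec k l); [lia|reflexivity].
  - intros k Hk Hkm. unfold Fl. destruct (Nat.eqb_spec k l) as [->|]; [reflexivity|].
    apply H; auto.
Qed.

Lemma sumL_exists_lt n F G l : sumL n F = sumL n G -> (l < n)%nat -> G l < F l ->
  exists m, (m < n)%nat /\ F m < G m.
Proof.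
  intros Hs Hl Hlt.
  destruct (classic (exists m, (m < n)%nat /\ F m < G m)) as [H|H]; [exact H|exfalso].
  set (Gl := fun k => if Nat.eqb k l then G l else F k).
  assert (HG : sumL n G <= sumL n Gl).
  { apply sumL_le. intros k Hk. unfold Gl. destruct (Nat.eqb_spec k l) as [->|]; [lra|].
    apply Rnot_lt_le. intros Hk'. apply H. exists k; auto. }
  assert (Gl_l : Gl l = G l) by (unfold Gl; rewrite Nat.eqb_refl; reflexivity).
  rewrite (sumL_update n F Gl l), Gl_l in Hs; auto.
  - lra.
  - intros k _ Hk. unfold Gl. destruct (Nat.eqb_spec k l); [lia|reflexivity].
Qed.

Lemma convex_increment_le cl h p q e : convex_on cl h -> 0 <= p <= q -> 0 < e -> q + e < cl ->
  h (p + e) - h p <= h (q + e) - h q.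
Proof.
  intros Hc Hpq He Hq.
  set (t := (q - p) / (q + e - p)).
  assert (Ht : 0 <= t <= 1).
  { unfold t. split; [apply Rdiv_le_0_compat; lra|].
    apply Rmult_le_reg_r with (q + e - p); [lra|].
    unfold Rdiv. rewrite Rmult_assoc, Rinv_l by lra. lra. }
  assert (E1 : p + e = t * p + (1 - t) * (q + e)) by (unfold t; field; lra).
  assert (E2 : q = (1 - t) * p + (1 - (1 - t)) * (q + e)) by (unfold t; field; lra).
  assert (H1 := Hc p (q + e) t ltac:(lra) ltac:(lra) Ht).
  assert (H2 := Hc p (q + e) (1 - t) ltac:(lra) ltac:(lra) ltac:(lra)).
  rewrite <- E1 in H1. rewrite <- E2 in H2. lra.
Qed.

(* The cost saved by a user carrying x of the load X of a link when it withdraws e. *)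
Definition marginal_cost (h : R -> R) (x X e : R) : R := x * h X - (x - e) * h (X - e).

Lemma marginal_cost_lt cl h x X x' X' e : convex_on cl h -> strictly_increasing_on cl h ->
  0 < e -> x' - e <= x -> 0 <= x -> e <= X' -> X' + e < X -> X < cl ->
  marginal_cost h x' X' e < marginal_cost h x X e.
Proof.
  intros Hc Hi He Hx' Hx HX' HX Hcl.
  assert (Hslope := convex_increment_le cl h (X' - e) (X - e) e Hc ltac:(lra) He ltac:(lra)).
  replace (X' - e + e) with X' in Hslope by ring.
  replace (X - e + e) with X in Hslope by ring.
  assert (Hpos : h (X' - e) < h X') by (apply Hi; lra).
  assert (Hlt : h X' < h (X - e)) by (apply Hi; lra).
  assert ((x' - e) * (h X' - h (X' - e)) <= x * (h X' - h (X' - e)))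
    by (apply Rmult_le_compat_r; lra).
  assert (x * (h X' - h (X' - e)) <= x * (h X - h (X - e)))
    by (apply Rmult_le_compat_l; lra).
  assert (e * h X' < e * h (X - e)) by (apply Rmult_lt_compat_l; lra).
  unfold marginal_cost. nra.
Qed.

Lemma convex_weight_exists a b x : b <= x <= a ->
  exists lam, 0 <= lam <= 1 /\ x = lam * a + (1 - lam) * b.
Proof.
  intros Hx. destruct (Req_dec a b) as [<-|Hab].
  - exists 1. split; [lra|]. lra.
  - exists ((x - b) / (a - b)). split; [|field; lra].
    split; [apply Rdiv_le_0_compat; lra|].
    apply Rmult_le_reg_r with (a - b); [lra|].
    unfold Rdiv. rewrite Rmult_assoc, Rinv_l by lra. lra.
Qed.

Lemma eq_of_sq_le_mul a b d : 0 <= a -> 0 <= b -> a + b <= 2 * d -> d * d <= a * b ->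
  a = d /\ b = d.
Proof.
  intros Ha Hb Hab Hd.
  assert (Hsq : (a + b) * (a + b) <= (2 * d) * (2 * d)) by (apply Rmult_le_compat; lra).
  assert (a = b) by nra. subst b. split; nra.
Qed.

Definition transfer (s : nat -> R) (l m : nat) (e : R) : nat -> R :=
  fun k => if Nat.eqb k l then s k - e else if Nat.eqb k m then s k + e else s k.

Lemma transfer_l s l m e : transfer s l m e l = s l - e.
Proof. unfold transfer. rewrite Nat.eqb_refl. reflexivity. Qed.

Lemma transfer_m s l m e : l <> m -> transfer s l m e m = s m + e.
Proof. intros H. unfold transfer. destruct (Nat.eqb_spec m l); [lia|]. now rewrite Nat.eqb_refl. Qed.

Lemma transfer_other s l m e k : k <> l -> k <> m -> transfer s l m e k = s k.
Proof. intros H1 H2. unfold transfer. destruct (Nat.eqb_spec k l), (Nat.eqb_spec k m); lia || reflexivity. Qed.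

Section Routing.

Variables (L : nat) (T : R -> R) (c r : nat -> R).

Definition cost_sum (u v : nat -> R) : R := sumL L (fun k => u k * Tl T c k (v k)).

Definition sys_cost (f : profile) : R := cost_sum (agg f) (agg f).

Lemma J_sum f : J L T c f 0 + J L T c f 1 = sys_cost f.
Proof. unfold J, sys_cost, cost_sum. rewrite <- sumL_add. apply sumL_ext. intros. unfold agg. ring. Qed.

Lemma agg_upd f i s k : (i < 2)%nat -> agg (upd f i s) k = s k + f (1 - i)%nat k.
Proof. intros Hi. unfold agg, upd. destruct i as [|[|]]; simpl; lia || lra. Qed.

Lemma agg_split f i k : (i < 2)%nat -> agg f k = f i k + f (1 - i)%nat k.
Proof. intros Hi. unfold agg. destruct i as [|[|]]; simpl; lia || lra. Qed.

Lemma feasible_upd f i s : (i < 2)%nat -> feasible L c r f ->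
  (forall k, (k < L)%nat -> 0 <= s k) -> sumL L s = r i ->
  (forall k, (k < L)%nat -> s k + f (1 - i)%nat k < c k) -> feasible L c r (upd f i s).
Proof.
  intros Hi [Fnn [Fsum Fcap]] Hs Hsum Hcap. split; [|split].
  - intros j k Hj Hk. unfold upd. destruct (Nat.eqb_spec j i); auto.
  - intros j Hj. unfold upd. destruct (Nat.eqb_spec j i) as [->|]; auto.
  - intros k Hk. rewrite agg_upd; auto.
Qed.

Lemma feasible_agg_sum f : feasible L c r f -> sumL L (agg f) = r 0%nat + r 1%nat.
Proof. intros [_ [Fsum _]]. unfold agg. rewrite sumL_add, !Fsum by lia. reflexivity. Qed.

Lemma agg_upd_transfer f i l m e k : (i < 2)%nat ->
  agg (upd f i (transfer (f i) l m e)) k = transfer (agg f) l m e k.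
Proof.
  intros Hi. rewrite agg_upd by auto. unfold transfer.
  destruct (Nat.eqb k l), (Nat.eqb k m); rewrite (agg_split f i k Hi); ring.
Qed.

Lemma feasible_transfer f i l m e : feasible L c r f -> (i < 2)%nat ->
  (l < L)%nat -> (m < L)%nat -> l <> m -> 0 <= e <= f i l -> agg f m + e < c m ->
  feasible L c r (upd f i (transfer (f i) l m e)).
Proof.
  intros Ff Hi Hl Hm Hlm He Hcap. pose proof Ff as [Fnn [Fsum Fcap]].
  apply feasible_upd; auto.
  - intros k Hk. destruct (Nat.eq_dec k l) as [->|]; [rewrite transfer_l; lra|].
    destruct (Nat.eq_dec k m) as [->|]; [rewrite transfer_m by auto; specialize (Fnn i m Hi Hm); lra|].
    rewrite transfer_other by auto. auto.
  - rewrite (sumL_update2 L _ (f i) l m), transfer_l, transfer_m, Fsum by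
      (auto; intros; apply transfer_other; auto).
    lra.
  - intros k Hk. rewrite <- (agg_upd f i _ k Hi), agg_upd_transfer by auto.
    destruct (Nat.eq_dec k l) as [->|]; [rewrite transfer_l; specialize (Fcap l Hl); lra|].
    destruct (Nat.eq_dec k m) as [->|]; [rewrite transfer_m; auto|].
    rewrite transfer_other by auto. auto.
Qed.

Lemma cost_sum_transfer u v l m e : (l < L)%nat -> (m < L)%nat -> l <> m ->
  cost_sum (transfer u l m e) (transfer v l m e)
  = cost_sum u v - marginal_cost (Tl T c l) (u l) (v l) e
    + marginal_cost (Tl T c m) (u m + e) (v m + e) e.
Proof.
  intros Hl Hm Hlm. unfold cost_sum, marginal_cost.
  rewrite (sumL_update2 L _ (fun k => u k * Tl T c k (v k)) l m) by
    (auto; intros; rewrite !transfer_other; auto).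
  rewrite !transfer_l, !transfer_m by auto.
  replace (u m + e - e) with (u m) by ring. replace (v m + e - e) with (v m) by ring.
  ring.
Qed.

Lemma J_upd_transfer f i l m e : (i < 2)%nat ->
  J L T c (upd f i (transfer (f i) l m e)) i
  = cost_sum (transfer (f i) l m e) (transfer (agg f) l m e).
Proof.
  intros Hi. apply sumL_ext. intros k _.
  rewrite agg_upd_transfer by auto. unfold upd. now rewrite Nat.eqb_refl.
Qed.

Lemma sys_cost_upd_transfer f i l m e : (i < 2)%nat ->
  sys_cost (upd f i (transfer (f i) l m e))
  = cost_sum (transfer (agg f) l m e) (transfer (agg f) l m e).
Proof. intros Hi. apply sumL_ext. intros k _. now rewrite agg_upd_transfer. Qed.

Lemma NEP_exchange fh i l m e : is_NEP L T c r fh -> (i < 2)%nat ->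
  (l < L)%nat -> (m < L)%nat -> l <> m -> 0 <= e <= fh i l -> agg fh m + e < c m ->
  marginal_cost (Tl T c l) (fh i l) (agg fh l) e
  <= marginal_cost (Tl T c m) (fh i m + e) (agg fh m + e) e.
Proof.
  intros [Ff NE] Hi Hl Hm Hlm He Hcap.
  assert (Hdev := NE i _ Hi (feasible_transfer fh i l m e Ff Hi Hl Hm Hlm He Hcap)).
  rewrite J_upd_transfer, cost_sum_transfer in Hdev by auto.
  unfold J, cost_sum in Hdev. lra.
Qed.

Lemma sys_min_exchange fs j l m e : feasible L c r fs ->
  (forall f, feasible L c r f -> sys_cost fs <= sys_cost f) -> (j < 2)%nat ->
  (l < L)%nat -> (m < L)%nat -> l <> m -> 0 <= e <= fs j m -> agg fs l + e < c l ->
  marginal_cost (Tl T c m) (agg fs m) (agg fs m) e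
  <= marginal_cost (Tl T c l) (agg fs l + e) (agg fs l + e) e.
Proof.
  intros Fs Smin Hj Hl Hm Hlm He Hcap.
  assert (Hdev := Smin _ (feasible_transfer fs j m l e Fs Hj Hm Hl (not_eq_sym Hlm) He Hcap)).
  rewrite sys_cost_upd_transfer, cost_sum_transfer in Hdev by auto.
  unfold sys_cost in Hdev. lra.
Qed.

Hypothesis link_cost : forall l, (l < L)%nat ->
  strictly_increasing_on (c l) (Tl T c l) /\ convex_on (c l) (Tl T c l).

Lemma NEP_flow_le_sys_min_agg fh fs i l : is_NEP L T c r fh -> feasible L c r fs ->
  (forall f, feasible L c r f -> sys_cost fs <= sys_cost f) -> (i < 2)%nat -> (l < L)%nat ->
  fh i l <= agg fs l.
Proof.
  intros NEP Fs Smin Hi Hl. pose proof NEP as [[Fhnn [_ Fhcap]] _].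
  pose proof Fs as [Fsnn [_ Fscap]].
  apply Rnot_lt_le. intros Hyx.
  assert (HxX : fh i l <= agg fh l)
    by (rewrite (agg_split fh i l Hi); specialize (Fhnn (1 - i)%nat l ltac:(lia) Hl); lra).
  assert (Hsum : sumL L (agg fh) = sumL L (agg fs))
    by (rewrite !feasible_agg_sum; auto; apply NEP).
  destruct (sumL_exists_lt L (agg fh) (agg fs) l Hsum Hl ltac:(lra)) as [m [Hm HBb]].
  assert (Hlm : l <> m) by (intros <-; lra).
  assert (Hy0 : 0 <= agg fs l)
    by (unfold agg; pose proof (Fsnn 0%nat l ltac:(lia) Hl);
        pose proof (Fsnn 1%nat l ltac:(lia) Hl); lra).
  assert (Ha0 : 0 <= fh i m) by auto.
  assert (HaB : fh i m <= agg fh m)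
    by (rewrite (agg_split fh i m Hi); specialize (Fhnn (1 - i)%nat m ltac:(lia) Hm); lra).
  assert (Hj : exists j, (j < 2)%nat /\ 0 < fs j m).
  { destruct (Rlt_le_dec 0 (fs 0%nat m)); [exists 0%nat; auto|exists 1%nat; split; auto].
    unfold agg in HBb, HaB. lra. }
  destruct Hj as [j [Hj Hfsj]].
  set (e := Rmin (Rmin (fh i l) (fs j m))
                 (Rmin ((agg fh l - agg fs l) / 3) ((agg fs m - agg fh m) / 3))).
  assert (He : 0 < e) by (unfold e; repeat apply Rmin_pos; lra).
  assert (He1 : e <= fh i l) by (unfold e; eapply Rle_trans; apply Rmin_l).
  assert (He2 : e <= fs j m) by (unfold e; eapply Rle_trans; [apply Rmin_l|apply Rmin_r]).
  assert (He3 : e <= (agg fh l - agg fs l) / 3) by (unfold e; eapply Rle_trans; [apply Rmin_r|apply Rmin_l]).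
  assert (He4 : e <= (agg fs m - agg fh m) / 3) by (unfold e; eapply Rle_trans; apply Rmin_r).
  specialize (Fhcap l Hl). specialize (Fscap m Hm).
  destruct (link_cost l Hl) as [Il Cl]. destruct (link_cost m Hm) as [Im Cm].
  assert (NE := NEP_exchange fh i l m e NEP Hi Hl Hm Hlm ltac:(lra) ltac:(lra)).
  assert (SO := sys_min_exchange fs j l m e Fs Smin Hj Hl Hm Hlm ltac:(lra) ltac:(lra)).
  assert (Ml := marginal_cost_lt (c l) (Tl T c l) (fh i l) (agg fh l)
                  (agg fs l + e) (agg fs l + e) e Cl Il He ltac:(lra) ltac:(lra) ltac:(lra) ltac:(lra) Fhcap).
  assert (Mm := marginal_cost_lt (c m) (Tl T c m) (agg fs m) (agg fs m)
                  (fh i m + e) (agg fh m + e) e Cm Im He ltac:(lra) ltac:(lra) ltac:(lra) ltac:(lra) Fscap).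
  lra.
Qed.

Lemma sys_min_response_to_NEP fh fs i : is_NEP L T c r fh -> feasible L c r fs ->
  (forall f, feasible L c r f -> sys_cost fs <= sys_cost f) -> (i < 2)%nat ->
  exists P, feasible L c r P /\ sys_cost P = sys_cost fs /\ J L T c fh i <= J L T c P i.
Proof.
  intros NEP Fs Smin Hi. pose proof NEP as [Fh NE]. pose proof Fh as [Fhnn [Fhsum _]].
  pose proof Fs as [_ [_ Fscap]].
  set (s := fun k => agg fs k - fh (1 - i)%nat k).
  assert (Hagg : forall k, agg (upd fh i s) k = agg fs k)
    by (intros k; rewrite agg_upd by auto; unfold s; ring).
  assert (FP : feasible L c r (upd fh i s)).
  { apply feasible_upd; auto.
    - intros k Hk. unfold s.
      pose proof (NEP_flow_le_sys_min_agg fh fs (1 - i)%nat k NEP Fs Smin ltac:(lia) Hk). lra.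
    - unfold s. rewrite sumL_sub, feasible_agg_sum, Fhsum by (auto || lia).
      destruct i as [|[|]]; simpl; lia || ring.
    - intros k Hk. rewrite <- agg_upd, Hagg by auto. auto. }
  exists (upd fh i s). split; [exact FP|]. split.
  - apply sumL_ext. intros k _. now rewrite Hagg.
  - exact (NE i s Hi FP).
Qed.

End Routing.

Lemma in_G_combination L T c r P Q lam : feasible L c r P -> feasible L c r Q -> 0 <= lam <= 1 ->
  in_G L T c r (lam * J L T c P 0 + (1 - lam) * J L T c Q 0,
                lam * J L T c P 1 + (1 - lam) * J L T c Q 1).
Proof.
  intros FP FQ Hlam.
  destruct (Req_dec lam 0) as [->|H0]; [|destruct (Req_dec lam 1) as [->|H1]].
  - exists ((1, Q) :: nil)%list. repeat split; try discriminate; simpl; try ring.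
    repeat (constructor; [split; simpl; [lra|auto]|]). constructor.
  - exists ((1, P) :: nil)%list. repeat split; try discriminate; simpl; try ring.
    repeat (constructor; [split; simpl; [lra|auto]|]). constructor.
  - exists ((lam, P) :: (1 - lam, Q) :: nil)%list. repeat split; try discriminate; simpl; try ring.
    repeat (constructor; [split; simpl; [lra|auto]|]). constructor.
Qed.

Lemma in_G_sum_ge L T c r v g : (forall f, feasible L c r f -> v <= J L T c f 0 + J L T c f 1) ->
  in_G L T c r g -> v <= fst g + snd g.
Proof.
  intros Hv [ws [_ [Hws [Hw1 [-> ->]]]]]. rewrite <- (Rmult_1_r v), <- Hw1. clear Hw1.
  induction Hws as [|[p f] ws [Hp Hf] _ IH]; simpl in *; [lra|].
  assert (p * v <= p * (J L T c f 0 + J L T c f 1)) by (apply Rmult_le_compat_l; auto; lra).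
  lra.
Qed.

Lemma equal_gain_point_in_G L T c r fh fs :
  (forall l, (l < L)%nat -> strictly_increasing_on (c l) (Tl T c l) /\ convex_on (c l) (Tl T c l)) ->
  is_NEP L T c r fh -> feasible L c r fs ->
  (forall f, feasible L c r f -> sys_cost L T c fs <= sys_cost L T c f) ->
  in_G L T c r ((J L T c fh 0 - J L T c fh 1 + sys_cost L T c fs) / 2,
                (J L T c fh 1 - J L T c fh 0 + sys_cost L T c fs) / 2).
Proof.
  intros HT NEP Fs Smin.
  destruct (sys_min_response_to_NEP L T c r HT fh fs 0 NEP Fs Smin ltac:(lia)) as [P [FP [SP HP]]].
  destruct (sys_min_response_to_NEP L T c r HT fh fs 1 NEP Fs Smin ltac:(lia)) as [Q [FQ [SQ HQ]]].
  rewrite <- (J_sum L T c P) in SP. rewrite <- (J_sum L T c Q) in SQ.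
  assert (Hh := Smin fh (proj1 NEP)). rewrite <- (J_sum L T c fh) in Hh.
  destruct (convex_weight_exists (J L T c P 0) (J L T c Q 0)
              ((J L T c fh 0 - J L T c fh 1 + sys_cost L T c fs) / 2)) as [lam [Hlam E]];
    [lra|].
  replace (_, _) with (lam * J L T c P 0 + (1 - lam) * J L T c Q 0,
                       lam * J L T c P 1 + (1 - lam) * J L T c Q 1).
  - exact (in_G_combination L T c r P Q lam FP FQ Hlam).
  - f_equal; nra.
Qed.

Theorem lemma3p5 (L : nat) (c r : nat -> R) (T : R -> R)
  (fhat : profile) (Jsys : R) (gt : R * R) :
  (0 < L)%nat ->
  (forall l, (l < L)%nat -> 0 < c l) ->
  0 < r 0%nat -> 0 < r 1%nat ->
  r 0%nat + r 1%nat < sumL L c ->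
  (forall l, (l < L)%nat ->
     (forall x, 0 <= x < c l -> 0 <= Tl T c l x) /\
     strictly_increasing_on (c l) (Tl T c l) /\
     convex_on (c l) (Tl T c l) /\
     C1_on (c l) (Tl T c l)) ->
  is_NEP L T c r fhat ->
  (forall f, is_NEP L T c r f ->
     forall i l, (i < 2)%nat -> (l < L)%nat -> f i l = fhat i l) ->
  is_sys_min L T c r Jsys ->
  is_NBS L T c r (J L T c fhat 0, J L T c fhat 1) gt ->
  fst gt + snd gt = Jsys /\
  J L T c fhat 0 - fst gt = J L T c fhat 1 - snd gt.
Proof.
  intros _ _ _ _ _ HT NEP _ [[fs [Fs Efs]] Smin] [[Gg [Hg0 Hg1]] [Max _]].
  cbn [fst snd] in Hg0, Hg1.
  assert (Hcost : forall l, (l < L)%nat ->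
            strictly_increasing_on (c l) (Tl T c l) /\ convex_on (c l) (Tl T c l))
    by (intros l Hl; destruct (HT l Hl) as [_ [Hi [Hc _]]]; auto).
  rewrite J_sum in Efs. subst Jsys.
  assert (Sopt : forall f, feasible L c r f -> sys_cost L T c fs <= sys_cost L T c f)
    by (intros f Ff; rewrite <- (J_sum L T c f); auto).
  assert (Hp := equal_gain_point_in_G L T c r fhat fs Hcost NEP Fs Sopt).
  assert (Hh := Smin fhat (proj1 NEP)).
  assert (Hg := in_G_sum_ge L T c r _ gt Smin Gg).
  assert (Hadm : bargain_adm L T c r (J L T c fhat 0, J L T c fhat 1)
                   ((J L T c fhat 0 - J L T c fhat 1 + sys_cost L T c fs) / 2,
                    (J L T c fhat 1 - J L T c fhat 0 + sys_cost L T c fs) / 2))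
    by (split; [exact Hp|cbn [fst snd]; split; lra]).
  assert (Hnash := Max _ Hadm).
  unfold nash_prod in Hnash. cbn [fst snd] in Hnash.
  set (d := (J L T c fhat 0 + J L T c fhat 1 - sys_cost L T c fs) / 2).
  assert (Hd : d * d <= (J L T c fhat 0 - fst gt) * (J L T c fhat 1 - snd gt))
    by (eapply Rle_trans; [|exact Hnash]; right; unfold d; field).
  destruct (eq_of_sq_le_mul (J L T c fhat 0 - fst gt) (J L T c fhat 1 - snd gt) d
              ltac:(lra) ltac:(lra) ltac:(unfold d; lra) Hd) as [E0 E1].
  unfold d in E0, E1. split; lra.
Qed.
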